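(* Let $(A,d)$ be a metric space and $\rho:[0,1]\to[0,1]$ an ndrc grey level map with $\rho(0)=0$. Then for all $u,v\in\mathcal F_A^*$, $$\sup_{\alpha\in[0,1]}h([\rho(u)]^\alpha,[\rho(v)]^\alpha)\le d_\infty(u,v),$$ with the convention $h(\emptyset,\emptyset)=0$ (for $\alpha>\rho(1)$ both $\alpha$-cuts are empty); i.e. $d_\infty(\rho(u),\rho(v))\le d_\infty(u,v)$.
   Context: A fuzzy subset of $A$ is a function $u:A\to[0,1]$. For $\alpha\in(0,1]$, $[u]^\alpha=\{x:u(x)\ge\alpha\}$, $[u]^0=\overline{\{x:u(x)>0\}}$. $\mathcal F_A^*$ is the set of fuzzy subsets that are normal, usc and compactly supported. $h$ is the Hausdorff metric on nonempty compact sets and $d_\infty(u,v)=\sup_{\alpha\in[0,1]}h([u]^\alpha,[v]^\alpha)$. A grey level map is a non-identically-zero $\rho:[0,1]\to[0,1]$; ndrc means nondecreasing and right continuous; $\rho(u)=\rho\circ u$. *)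

From Stdlib Require Import Reals Lra ClassicalEpsilon List.
Open Scope R_scope.

Definition is_metric {A : Type} (d : A -> A -> R) : Prop :=
  (forall x y, 0 <= d x y) /\
  (forall x y, d x y = 0 <-> x = y) /\
  (forall x y, d x y = d y x) /\
  (forall x y z, d x z <= d x y + d y z).

(** Supremum of a set of reals; convention 0 if empty or unbounded. *)
Definition Rsup (E : R -> Prop) : R :=
  match excluded_middle_informative (bound E /\ exists x, E x) with
  | left H => proj1_sig (completeness E (proj1 H) (proj2 H))
  | right _ => 0
  end.

Definition Rinf (E : R -> Prop) : R := - Rsup (fun r => E (- r)).

Section Metric.
Context {A : Type} (d : A -> A -> R).

Definition is_open (U : A -> Prop) : Prop :=
  forall x, U x -> exists eps, 0 < eps /\ forall y, d x y < eps -> U y.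

Definition compact (K : A -> Prop) : Prop :=
  forall (I : Type) (U : I -> A -> Prop),
    (forall i, is_open (U i)) ->
    (forall x, K x -> exists i, U i x) ->
    exists l : list I, forall x, K x -> exists i, In i l /\ U i x.

Definition closure (S : A -> Prop) : A -> Prop :=
  fun x => forall eps, 0 < eps -> exists y, S y /\ d x y < eps.

(** distance from a point to a set, and Hausdorff distance
    (with h(empty,empty) = 0 by the sup convention). *)
Definition dist_pt (x : A) (L : A -> Prop) : R :=
  Rinf (fun r => exists y, L y /\ r = d x y).

Definition hausdorff (K L : A -> Prop) : R :=
  Rmax (Rsup (fun r => exists x, K x /\ r = dist_pt x L))
       (Rsup (fun r => exists y, L y /\ r = dist_pt y K)).

Definition cut (u : A -> R) (alpha : R) : A -> Prop :=
  fun x => if Rlt_dec 0 alpha then alpha <= u x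
           else closure (fun y => 0 < u y) x.

Definition is_fuzzy (u : A -> R) : Prop := forall x, 0 <= u x <= 1.
Definition normal (u : A -> R) : Prop := exists x, u x = 1.
Definition usc (u : A -> R) : Prop :=
  forall x eps, 0 < eps -> exists delta, 0 < delta /\
    forall y, d x y < delta -> u y < u x + eps.

Definition in_FA_star (u : A -> R) : Prop :=
  is_fuzzy u /\ normal u /\ usc u /\ compact (cut u 0).

Definition d_infty (u v : A -> R) : R :=
  Rsup (fun r => exists alpha, 0 <= alpha <= 1 /\
                   r = hausdorff (cut u alpha) (cut v alpha)).
End Metric.

(** Grey level maps rho : [0,1] -> [0,1] (represented on R, only values on
    [0,1] matter). *)
Definition grey_level_map (rho : R -> R) : Prop :=
  (forall t, 0 <= t <= 1 -> 0 <= rho t <= 1) /\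
  (exists t, 0 <= t <= 1 /\ rho t <> 0).

Definition ndrc (rho : R -> R) : Prop :=
  (forall s t, 0 <= s <= t -> t <= 1 -> rho s <= rho t) /\
  (forall t, 0 <= t < 1 -> forall eps, 0 < eps -> exists delta, 0 < delta /\
     forall s, t <= s <= 1 -> s < t + delta -> Rabs (rho s - rho t) < eps).

(* For alpha > 0 the superlevel set {t | alpha <= rho t} of an ndrc map with
   rho 0 = 0 is an interval [b, 1] with b > 0, so the alpha-cut of rho(u) is
   exactly the b-cut of u, while the b-cut of v is contained in the alpha-cut
   of rho(v); every point of [rho(u)]^alpha is therefore within d_infty(u,v)
   of [rho(v)]^alpha. The 0-cut is the closure of the union of the positive
   cuts, and distances to a fixed set are 1-Lipschitz, so the same bound
   passes to the limit. *)

From Pilot Require Import Defs.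
From Stdlib Require Import Reals Lra Classical ClassicalEpsilon List
  FunctionalExtensionality PropExtensionality.
Open Scope R_scope.

Lemma Rsup_is_lub (E : R -> Prop) : bound E -> (exists x, E x) -> is_lub E (Rsup E).
Proof.
  intros Hb He. unfold Rsup.
  destruct excluded_middle_informative as [H|H]; [|tauto].
  exact (proj2_sig (completeness E (proj1 H) (proj2 H))).
Qed.

Lemma Rsup_default (E : R -> Prop) : ~ (bound E /\ exists x, E x) -> Rsup E = 0.
Proof.
  intros H. unfold Rsup. destruct excluded_middle_informative; tauto.
Qed.

Lemma Rsup_upper (E : R -> Prop) r : bound E -> E r -> r <= Rsup E.
Proof.
  intros Hb Hr. apply (Rsup_is_lub E Hb (ex_intro _ r Hr)). exact Hr.
Qed.

(* The hypothesis [0 <= D] covers the junk value [Rsup E = 0] for empty [E]. *)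
Lemma Rsup_least (E : R -> Prop) D :
  (forall r, E r -> r <= D) -> 0 <= D -> Rsup E <= D.
Proof.
  intros HD HD0. destruct (classic (exists x, E x)) as [He|He].
  - apply (Rsup_is_lub E (ex_intro _ D HD) He). exact HD.
  - rewrite Rsup_default; tauto.
Qed.

Lemma Rsup_ge0 (E : R -> Prop) : (forall r, E r -> 0 <= r) -> 0 <= Rsup E.
Proof.
  intros H. destruct (classic (bound E /\ exists x, E x)) as [[Hb [x Hx]]|Hn].
  - apply Rle_trans with x; [apply H | apply Rsup_upper]; assumption.
  - rewrite Rsup_default; [lra | assumption].
Qed.

Section MetricSpace.
Context {A : Type} (d : A -> A -> R).
Hypothesis Hd : is_metric d.

Lemma dist_ge0 x y : 0 <= d x y. Proof. apply Hd. Qed.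
Lemma dist_refl x : d x x = 0. Proof. apply Hd; reflexivity. Qed.
Lemma dist_sym x y : d x y = d y x. Proof. apply Hd. Qed.
Lemma dist_triangle x y z : d x z <= d x y + d y z. Proof. apply Hd. Qed.

Lemma bound_neg_dists x (L : A -> Prop) :
  bound (fun r => exists y, L y /\ - r = d x y).
Proof.
  exists 0. intros r [y [_ Hy]]. pose proof (dist_ge0 x y). lra.
Qed.

Lemma dist_pt_le x (L : A -> Prop) y : L y -> dist_pt d x L <= d x y.
Proof.
  intros Hy. unfold dist_pt, Rinf.
  enough (- d x y <= Rsup (fun r => exists y, L y /\ - r = d x y)) by lra.
  apply Rsup_upper; [apply bound_neg_dists | exists y; split; [assumption | lra]].
Qed.

Lemma dist_pt_ge0 x L : 0 <= dist_pt d x L.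
Proof.
  unfold dist_pt, Rinf.
  enough (Rsup (fun r => exists y, L y /\ - r = d x y) <= 0) by lra.
  apply Rsup_least; [|lra]. intros r [y [_ Hy]]. pose proof (dist_ge0 x y). lra.
Qed.

Lemma dist_pt_approx x (L : A -> Prop) y0 eps : L y0 -> 0 < eps ->
  exists y, L y /\ d x y < dist_pt d x L + eps.
Proof.
  intros Hy0 Heps. apply NNPP. intros Hn.
  assert (Hfar : forall y, L y -> dist_pt d x L + eps <= d x y).
  { intros y Hy. apply Rnot_lt_le. intros Hlt. apply Hn. exists y; auto. }
  unfold dist_pt, Rinf in Hfar.
  set (F := fun r => exists y, L y /\ - r = d x y) in Hfar.
  enough (Rsup F <= Rsup F - eps) by lra.
  apply (Rsup_is_lub F (bound_neg_dists x L)).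
  - exists (- d x y0), y0. split; [assumption | lra].
  - intros r [y [Hy Hr]]. specialize (Hfar y Hy). lra.
Qed.

Lemma dist_pt_le_bound x (L : A -> Prop) M :
  (forall y, L y -> d x y <= M) -> 0 <= M -> dist_pt d x L <= M.
Proof.
  intros HM HM0. destruct (classic (exists y, L y)) as [[y Hy]|Hn].
  - apply Rle_trans with (d x y); [apply dist_pt_le | apply HM]; assumption.
  - unfold dist_pt, Rinf. rewrite Rsup_default; [lra|].
    intros [_ [r [y [Hy _]]]]. apply Hn. eauto.
Qed.

Lemma dist_pt_subset x (L L' : A -> Prop) y0 :
  (forall y, L y -> L' y) -> L y0 -> dist_pt d x L' <= dist_pt d x L.
Proof.
  intros HLL' Hy0. apply Rle_plus_epsilon. intros eps Heps.
  destruct (dist_pt_approx x L y0 eps Hy0 Heps) as [y [Hy Hxy]].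
  pose proof (dist_pt_le x L' y (HLL' y Hy)). lra.
Qed.

Lemma dist_pt_lipschitz x y (L : A -> Prop) z0 :
  L z0 -> dist_pt d x L <= d x y + dist_pt d y L.
Proof.
  intros Hz0. apply Rle_plus_epsilon. intros eps Heps.
  destruct (dist_pt_approx y L z0 eps Hz0 Heps) as [z [Hz Hyz]].
  pose proof (dist_pt_le x L z Hz). pose proof (dist_triangle x y z). lra.
Qed.

Lemma hausdorff_ge0 K L : 0 <= hausdorff d K L.
Proof.
  unfold hausdorff. apply Rle_trans with (2 := Rmax_l _ _).
  apply Rsup_ge0. intros r [x [_ ->]]. apply dist_pt_ge0.
Qed.

Lemma hausdorff_sym K L : hausdorff d K L = hausdorff d L K.
Proof. apply Rmax_comm. Qed.

Lemma hausdorff_le K L D :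
  (forall x, K x -> dist_pt d x L <= D) -> (forall y, L y -> dist_pt d y K <= D) ->
  0 <= D -> hausdorff d K L <= D.
Proof.
  intros HK HL HD0. unfold hausdorff.
  apply Rmax_lub; apply Rsup_least; try assumption; intros r [x [Hx ->]]; auto.
Qed.

Section BoundedPair.
Variables (K L : A -> Prop) (z0 : A) (M : R).
Hypotheses (HK : forall x, K x -> d x z0 <= M) (HL : forall y, L y -> d y z0 <= M).

Lemma dist_le_diam x y : K x -> L y -> d x y <= M + M.
Proof.
  intros Hx Hy. pose proof (dist_triangle x z0 y).
  rewrite (dist_sym z0 y) in *. pose proof (HK x Hx). pose proof (HL y Hy). lra.
Qed.

Lemma hausdorff_le_diam : 0 <= M -> hausdorff d K L <= M + M.
Proof.
  intros HM0. apply hausdorff_le; [| |lra]; intros p Hp; apply dist_pt_le_bound; try lra;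
    intros q Hq; [| rewrite dist_sym]; apply dist_le_diam; assumption.
Qed.

Lemma dist_pt_le_hausdorff x : K x -> dist_pt d x L <= hausdorff d K L.
Proof.
  intros Hx. unfold hausdorff. apply Rle_trans with (2 := Rmax_l _ _).
  apply Rsup_upper; [|exists x; auto].
  exists (M + M). intros r [p [Hp ->]]. apply dist_pt_le_bound.
  - intros q Hq. apply dist_le_diam; assumption.
  - pose proof (HK p Hp). pose proof (dist_ge0 p z0). lra.
Qed.
End BoundedPair.

Fixpoint dist_sum (z0 : A) (l : list A) : R :=
  match l with nil => 0 | x :: l' => d x z0 + dist_sum z0 l' end.

Lemma dist_sum_ge0 z0 l : 0 <= dist_sum z0 l.
Proof.
  induction l as [|x l IH]; simpl; [lra|]. pose proof (dist_ge0 x z0). lra.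
Qed.

Lemma dist_le_dist_sum z0 l x : In x l -> d x z0 <= dist_sum z0 l.
Proof.
  induction l as [|y l IH]; simpl; [tauto|]. intros [->|Hx].
  - pose proof (dist_sum_ge0 z0 l). lra.
  - pose proof (IH Hx). pose proof (dist_ge0 y z0). lra.
Qed.

(* Cover [K] by the unit balls around its own points. *)
Lemma compact_bounded (K : A -> Prop) z0 : Defs.compact d K ->
  exists M, 0 <= M /\ forall x, K x -> d x z0 <= M.
Proof.
  intros HK.
  destruct (HK A (fun c y => d c y < 1)) as [l Hl].
  - intros c y Hy. exists (1 - d c y). split; [lra|].
    intros w Hw. pose proof (dist_triangle c y w). lra.
  - intros x _. exists x. rewrite dist_refl. lra.
  - exists (1 + dist_sum z0 l). split; [pose proof (dist_sum_ge0 z0 l); lra|].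
    intros x Hx. destruct (Hl x Hx) as [c [Hc Hcx]].
    pose proof (dist_le_dist_sum z0 l c Hc). pose proof (dist_triangle x c z0).
    rewrite (dist_sym x c) in *. lra.
Qed.

Lemma cut_subset_support (u : A -> R) b x : 0 <= b -> cut d u b x -> cut d u 0 x.
Proof.
  unfold cut. intros Hb. destruct (Rlt_dec 0 0); [lra|].
  destruct (Rlt_dec 0 b); [|auto].
  intros Hx eps Heps. exists x. rewrite dist_refl. split; lra.
Qed.

Lemma cut_pos (u : A -> R) b x : 0 < b -> (cut d u b x <-> b <= u x).
Proof. intros Hb. unfold cut. destruct (Rlt_dec 0 b); [tauto | lra]. Qed.

Lemma cuts_bounded u z0 : in_FA_star d u ->
  exists M, 0 <= M /\ forall b x, 0 <= b -> cut d u b x -> d x z0 <= M.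
Proof.
  intros [_ [_ [_ Hc]]]. destruct (compact_bounded _ z0 Hc) as [M [HM0 HM]].
  exists M. split; [assumption|]. intros b x Hb Hx.
  apply HM, (cut_subset_support u b); assumption.
Qed.

Lemma d_infty_ge0 u v : 0 <= d_infty d u v.
Proof. apply Rsup_ge0. intros r [a [_ ->]]. apply hausdorff_ge0. Qed.

Lemma d_infty_sym u v : d_infty d u v = d_infty d v u.
Proof.
  unfold d_infty. f_equal. apply functional_extensionality. intros r.
  apply propositional_extensionality.
  split; intros [a [Ha ->]]; exists a; split; auto; apply hausdorff_sym.
Qed.

Lemma dist_pt_cut_le_d_infty u v : in_FA_star d u -> in_FA_star d v ->
  forall b x, 0 <= b <= 1 -> cut d u b x -> dist_pt d x (cut d v b) <= d_infty d u v.
Proof.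
  intros Hu Hv b x Hb Hx. pose proof Hu as [_ [[z0 _] _]].
  destruct (cuts_bounded u z0 Hu) as [Mu [HMu0 HMu]].
  destruct (cuts_bounded v z0 Hv) as [Mv [HMv0 HMv]].
  set (M := Mu + Mv).
  assert (HuM : forall a y, 0 <= a -> cut d u a y -> d y z0 <= M).
  { intros a y Ha Hy. pose proof (HMu a y Ha Hy). unfold M. lra. }
  assert (HvM : forall a y, 0 <= a -> cut d v a y -> d y z0 <= M).
  { intros a y Ha Hy. pose proof (HMv a y Ha Hy). unfold M. lra. }
  apply Rle_trans with (hausdorff d (cut d u b) (cut d v b)).
  - apply (dist_pt_le_hausdorff _ _ z0 M); [..| assumption];
      intros y Hy; [apply (HuM b) | apply (HvM b)]; solve [apply Hb | assumption].
  - apply Rsup_upper; [|exists b; auto].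
    exists (M + M). intros r [a [Ha ->]].
    apply (hausdorff_le_diam _ _ z0); [..| unfold M; lra];
      intros y Hy; [apply (HuM a) | apply (HvM a)]; solve [apply Ha | assumption].
Qed.
End MetricSpace.

Lemma ndrc_superlevel (rho : R -> R) (Hnd : ndrc rho) (Hrho0 : rho 0 = 0) alpha t0 :
  0 < alpha -> 0 <= t0 <= 1 -> alpha <= rho t0 ->
  exists b, 0 < b <= 1 /\ forall t, 0 <= t <= 1 -> (alpha <= rho t <-> b <= t).
Proof.
  intros Halpha Ht0 Hrt0. destruct Hnd as [Hmon Hrc].
  set (E := fun t => 0 <= t <= 1 /\ rho t < alpha).
  assert (HE0 : E 0) by (split; lra).
  destruct (completeness E) as [b [Hub Hlub]];
    [exists 1; intros t Ht; apply Ht | exists 0; exact HE0|].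
  assert (Hbelow : forall t, 0 <= t <= 1 -> alpha <= rho t -> b <= t).
  { intros t Ht Hrt. apply Hlub. intros s [Hs Hrs].
    apply Rnot_lt_le. intros Hts.
    pose proof (Hmon t s (conj (proj1 Ht) (Rlt_le _ _ Hts)) (proj2 Hs)). lra. }
  assert (Hb0 : 0 <= b) by (apply Hub; exact HE0).
  assert (Hbt0 : b <= t0) by (apply Hbelow; assumption).
  (* Right continuity at [b] forbids [rho b < alpha]: points just to the
     right of [b] would then lie in [E]. *)
  assert (Hrb : alpha <= rho b).
  { destruct (Req_dec b t0) as [->|Hbt0']; [assumption|].
    assert (Hbt0s : b < t0) by (destruct (Rle_lt_or_eq_dec _ _ Hbt0); tauto).
    apply Rnot_lt_le. intros Hlt.
    destruct (Hrc b (conj Hb0 (ltac:(lra) : b < 1)) (alpha - rho b))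
      as [delta [Hdelta Hnear]]; [lra|].
    set (s := Rmin (b + delta / 2) t0).
    assert (Hs : b < s) by (unfold s; apply Rmin_glb_lt; lra).
    assert (Hs1 : s <= t0) by apply Rmin_r.
    assert (Hsd : s <= b + delta / 2) by apply Rmin_l.
    specialize (Hnear s ltac:(lra) ltac:(lra)). apply Rabs_def2 in Hnear.
    assert (HEs : E s) by (split; lra). pose proof (Hub s HEs). lra. }
  exists b. split; [split|].
  - destruct (Rle_lt_or_eq_dec 0 b Hb0) as [|Hb]; [assumption|].
    rewrite <- Hb, Hrho0 in Hrb. lra.
  - lra.
  - intros t Ht. split; [apply Hbelow; assumption|].
    intros Hbt. apply Rle_trans with (rho b); [assumption | apply Hmon; lra].
Qed.

Section GreyLevel.
Context {A : Type} (d : A -> A -> R).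
Hypothesis Hd : is_metric d.
Variable rho : R -> R.
Hypotheses (Hnd : ndrc rho) (Hrho0 : rho 0 = 0).

Variables (u v : A -> R) (D : R).
Hypotheses (Hu : is_fuzzy u) (Hv : is_fuzzy v) (Hvn : normal v).
Hypothesis HD :
  forall b x, 0 <= b <= 1 -> cut d u b x -> dist_pt d x (cut d v b) <= D.

Lemma dist_pt_grey_cut_pos alpha x : 0 < alpha -> alpha <= rho (u x) ->
  dist_pt d x (cut d (fun y => rho (v y)) alpha) <= D.
Proof.
  intros Halpha Hx.
  destruct (ndrc_superlevel rho Hnd Hrho0 alpha (u x) Halpha (Hu x) Hx) as [b [Hb Hlevel]].
  assert (Hsub : forall y, cut d v b y -> cut d (fun y => rho (v y)) alpha y).
  { intros y Hy. apply cut_pos in Hy; [|lra]. apply cut_pos; [assumption|].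
    apply Hlevel; [apply Hv | assumption]. }
  destruct Hvn as [x1 Hx1].
  apply Rle_trans with (dist_pt d x (cut d v b)).
  - apply (dist_pt_subset d Hd x _ _ x1 Hsub). apply cut_pos; lra.
  - apply HD; [lra|]. apply cut_pos; [lra|]. apply Hlevel; [apply Hu | assumption].
Qed.

Lemma normal_in_grey_cut beta : 0 < beta -> beta <= rho 1 ->
  exists x1, cut d (fun y => rho (v y)) beta x1.
Proof.
  intros Hbeta Hbeta1. destruct Hvn as [x1 Hx1]. exists x1.
  apply cut_pos; [assumption|]. rewrite Hx1. assumption.
Qed.

(* A point of the 0-cut is a limit of points [y] with [rho (u y) > 0], each of
   which lies in the positive cut at level [rho (u y)]. *)
Lemma dist_pt_grey_cut alpha x : 0 <= alpha <= 1 ->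
  cut d (fun y => rho (u y)) alpha x ->
  dist_pt d x (cut d (fun y => rho (v y)) alpha) <= D.
Proof.
  intros Halpha Hx. destruct (Rlt_dec 0 alpha) as [Hpos|Hzero].
  - apply cut_pos in Hx; [|assumption]. apply dist_pt_grey_cut_pos; assumption.
  - assert (alpha = 0) as -> by lra.
    unfold cut in Hx. destruct (Rlt_dec 0 0); [lra|].
    apply Rle_plus_epsilon. intros eps Heps.
    destruct (Hx eps Heps) as [y [Hy Hxy]].
    set (beta := rho (u y)) in Hy.
    assert (Hbeta1 : beta <= rho 1) by (apply Hnd; [apply Hu | lra]).
    destruct (normal_in_grey_cut beta ltac:(lra) Hbeta1) as [x1 Hx1].
    pose proof (cut_subset_support d Hd _ beta x1 ltac:(lra) Hx1) as Hx1'.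
    pose proof (dist_pt_lipschitz d Hd x y _ x1 Hx1').
    assert (HyD : dist_pt d y (cut d (fun y => rho (v y)) 0) <= D).
    { apply Rle_trans with (dist_pt d y (cut d (fun y => rho (v y)) beta)).
      - apply (dist_pt_subset d Hd y _ _ x1); [|assumption].
        intros z Hz. apply (cut_subset_support d Hd _ beta); [lra | assumption].
      - apply dist_pt_grey_cut_pos; [assumption | apply Rle_refl]. }
    lra.
Qed.
End GreyLevel.

Theorem mainTheorem10 (A : Type) (d : A -> A -> R) (Hd : is_metric d)
  (rho : R -> R) (Hrho : grey_level_map rho) (Hnd : ndrc rho)
  (Hrho0 : rho 0 = 0)
  (u v : A -> R) (Hu : in_FA_star d u) (Hv : in_FA_star d v) :
  Rsup (fun r => exists alpha, 0 <= alpha <= 1 /\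
          r = hausdorff d (cut d (fun x => rho (u x)) alpha)
                          (cut d (fun x => rho (v x)) alpha))
  <= d_infty d u v.
Proof.
  pose proof Hu as [Hu_fuzzy [Hu_normal _]].
  pose proof Hv as [Hv_fuzzy [Hv_normal _]].
  pose proof (dist_pt_cut_le_d_infty d Hd u v Hu Hv) as Huv.
  pose proof (dist_pt_cut_le_d_infty d Hd v u Hv Hu) as Hvu.
  rewrite d_infty_sym in Hvu.
  pose proof (d_infty_ge0 d Hd u v) as HD0.
  apply Rsup_least; [|assumption]. intros r [alpha [Halpha ->]].
  apply hausdorff_le; [| |assumption]; intros x Hx.
  - exact (dist_pt_grey_cut d Hd rho Hnd Hrho0 u v _
             Hu_fuzzy Hv_fuzzy Hv_normal Huv alpha x Halpha Hx).
  - exact (dist_pt_grey_cut d Hd rho Hnd Hrho0 v u _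
             Hv_fuzzy Hu_fuzzy Hu_normal Hvu alpha x Halpha Hx).
Qed.
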